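(* Let $A$ be an order complete Banach lattice algebra, let $\Lambda$ be an index set and let $\{p_\lambda\}_{\lambda\in\Lambda}\subseteq BP_l(A)\cap BP_r(A)$ satisfy $p_\alpha p_\beta=\delta_{\alpha\beta}p_\alpha$ for all $\alpha,\beta\in\Lambda$ ($\delta_{\alpha\beta}$ the Kronecker delta). Let $\Gamma\subseteq\Lambda\times\Lambda$ be arbitrary. Then for every $x\in A_+$ the supremum $P_\Gamma(x)=\bigvee_{(\alpha,\beta)\in\Gamma}p_\alpha x p_\beta$ exists in $A$, and the map $P_\Gamma\colon A_+\to A_+$ extends to a unique band projection $P_\Gamma\colon A\to A$.
   Context: A Banach lattice algebra is a real Banach lattice $A$ equipped with an associative bilinear product making $(A,\cdot)$ a Banach algebra ($\|xy\|\le\|x\|\|y\|$) such that $xy\ge 0$ whenever $x,y\ge0$. It is order complete if every nonempty subset bounded above has a supremum. For $a\in A$, $L_a,R_a\colon A\to A$ denote the multiplication operators $L_a(x)=ax$, $R_a(x)=xa$. A band projection on a Banach lattice $X$ is an operator $P\colon X\to X$ with $P^2=P$ and $0\le P\le I_X$ (equivalently, the projection onto a projection band along its disjoint complement). $BP_l(A)=\{a\in A_+: L_a \text{ is a band projection}\}$ and $BP_r(A)=\{a\in A_+: R_a\text{ is a band projection}\}$. *)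

From HB Require Import structures.
From mathcomp Require Import all_boot all_order all_algebra.
From mathcomp Require Import all_classical all_reals all_analysis.
Set Implicit Arguments. Unset Strict Implicit. Unset Printing Implicit Defensive.
Import Order.TTheory GRing.Theory Num.Theory.
Import numFieldNormedType.Exports.
Local Open Scope classical_set_scope.
Local Open Scope ring_scope.

Section BLA.
Context {R : realType} {A : completeNormedModType R}.

Definition is_sup (le : A -> A -> Prop) (S : set A) (s : A) : Prop :=
  (forall y, S y -> le y s) /\
  (forall u, (forall y, S y -> le y u) -> le s u).

Definition is_linear (T : A -> A) : Prop :=
  forall (a : R) (x y : A), T (a *: x + y) = a *: T x + T y.

Record banach_lattice_algebra (le : A -> A -> Prop) (mul : A -> A -> A)
  : Prop := BLA {
  bla_refl : forall x, le x x;
  bla_antisym : forall x y, le x y -> le y x -> x = y;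
  bla_trans : forall x y z, le x y -> le y z -> le x z;
  bla_add : forall x y z, le x y -> le (x + z) (y + z);
  bla_scale : forall (a : R) x, 0 <= a -> le 0 x -> le 0 (a *: x);
  bla_lattice : forall x y, exists s, is_sup le [set x; y] s;
  bla_lattice_norm : forall x y ax ay,
      is_sup le [set x; - x] ax -> is_sup le [set y; - y] ay ->
      le ax ay -> `|x| <= `|y|;
  (* (completeness of the norm is part of completeNormedModType) *)
  bla_mulA : forall x y z, mul x (mul y z) = mul (mul x y) z;
  bla_mul_linl : forall z, is_linear (fun x => mul x z);
  bla_mul_linr : forall z, is_linear (fun x => mul z x);
  bla_mul_norm : forall x y, `|mul x y| <= `|x| * `|y|;
  bla_mul_pos : forall x y, le 0 x -> le 0 y -> le 0 (mul x y)
}.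

Definition order_complete (le : A -> A -> Prop) : Prop :=
  forall S : set A, S !=set0 -> (exists u, forall y, S y -> le y u) ->
    exists s, is_sup le S s.

Definition band_projection (le : A -> A -> Prop) (P : A -> A) : Prop :=
  is_linear P /\ (forall x, P (P x) = P x) /\
  (forall x, le 0 x -> le 0 (P x) /\ le (P x) x).

Definition BP_l (le : A -> A -> Prop) (mul : A -> A -> A) : set A :=
  [set a | le 0 a /\ band_projection le (fun x => mul a x)].

Definition BP_r (le : A -> A -> Prop) (mul : A -> A -> A) : set A :=
  [set a | le 0 a /\ band_projection le (fun x => mul x a)].

End BLA.

From HB Require Import structures.
From mathcomp Require Import all_boot all_order all_algebra.
From mathcomp Require Import all_classical all_reals all_analysis.
Import Order.TTheory GRing.Theory Num.Theory.
Import numFieldNormedType.Exports.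
Set Implicit Arguments. Unset Strict Implicit. Unset Printing Implicit Defensive.
Local Open Scope classical_set_scope.
Local Open Scope ring_scope.

(* The operators Q_(a,b) x = p_a x p_b, (a,b) in Gamma, are band projections
   with Q_i Q_j = 0 for i <> j.  For x >= 0 the supremum s(x) of 0 and the
   Q_i x exists by order completeness, x being an upper bound.  The map s is
   additive on the positive cone: with t = s(x + y), orthogonality gives
   Q_i x + Q_j y <= Q_i t + Q_j t <= t for i <> j, hence s(x) + s(y) <= t.
   Being additive and positively homogeneous, s extends uniquely to the linear
   map x |-> s(x^+) - s(x^-), which inherits idempotence and 0 <= P <= I from
   the positive cone. *)

Section VectorLattice.
Context {R : realType} {A : completeNormedModType R}.

Record vector_lattice (le : A -> A -> Prop) : Prop := VectorLattice {
  vl_refl : forall x, le x x;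
  vl_antisym : forall x y, le x y -> le y x -> x = y;
  vl_trans : forall x y z, le x y -> le y z -> le x z;
  vl_add : forall x y z, le x y -> le (x + z) (y + z);
  vl_scale : forall (c : R) x, 0 <= c -> le 0 x -> le 0 (c *: x);
  vl_lattice : forall x y, exists s, is_sup le [set x; y] s
}.

Lemma bla_vector_lattice le mul :
  banach_lattice_algebra le mul -> vector_lattice le.
Proof. by case. Qed.

End VectorLattice.

Section Linear.
Context {R : realType} {A : completeNormedModType R} (T : A -> A).
Hypothesis linT : is_linear T.
Implicit Types x y : A.

Lemma lin0 : T 0 = 0.
Proof.
have h := linT 1 0 0; rewrite !scale1r addr0 in h.
by apply: (@addrI _ (T 0)); rewrite addr0 -h.
Qed.

Lemma linD x y : T (x + y) = T x + T y.
Proof. by have := linT 1 x y; rewrite !scale1r. Qed.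

Lemma linZ c x : T (c *: x) = c *: T x.
Proof. by have := linT c x 0; rewrite !addr0 lin0 addr0. Qed.

Lemma linN x : T (- x) = - T x.
Proof. by rewrite -scaleN1r linZ scaleN1r. Qed.

Lemma linB x y : T (x - y) = T x - T y.
Proof. by rewrite linD linN. Qed.

End Linear.

Section OrderedSpace.
Context {R : realType} {A : completeNormedModType R} {le : A -> A -> Prop}.
Implicit Types x y z a b t u v : A.
Hypothesis HV : vector_lattice le.

Lemma vl_lerD x y u v : le x y -> le u v -> le (x + u) (y + v).
Proof.
move=> lexy leuv; apply: (vl_trans HV (vl_add HV u lexy)).
by rewrite !(addrC y); exact: vl_add.
Qed.

Lemma vl_addr_ge0 x y : le 0 x -> le 0 y -> le 0 (x + y).
Proof. by move=> x0 y0; have := vl_lerD x0 y0; rewrite addr0. Qed.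

Lemma vl_lerDl x y : le 0 y -> le x (x + y).
Proof. by move=> y0; have := vl_lerD (vl_refl HV x) y0; rewrite addr0. Qed.

Lemma vl_lerBrDr u v t : le u (t - v) <-> le (u + v) t.
Proof.
split=> h; first by have := vl_add HV v h; rewrite subrK.
by have := vl_add HV (- v) h; rewrite addrK.
Qed.

Lemma vl_subr_ge0 x y : le 0 (y - x) <-> le x y.
Proof. by rewrite vl_lerBrDr add0r. Qed.

Lemma vl_ler_wpZ2l c x y : 0 <= c -> le x y -> le (c *: x) (c *: y).
Proof.
move=> c0 /vl_subr_ge0 lexy; apply/vl_subr_ge0.
by rewrite -scalerBr; exact: vl_scale.
Qed.

Lemma vl_sup_unique S s s' : is_sup le S s -> is_sup le S s' -> s = s'.
Proof.
by move=> [ubs ls] [ubs' ls']; apply: (vl_antisym HV); [apply: ls | apply: ls'].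
Qed.

Definition pos_part x : A := xget 0 (is_sup le [set x; 0]).
Definition neg_part x := pos_part x - x.

Lemma pos_partP x : is_sup le [set x; 0] (pos_part x).
Proof. apply: xgetPex; exact: vl_lattice HV x 0. Qed.

Lemma pos_part_ge0 x : le 0 (pos_part x).
Proof. by apply: (pos_partP x).1; right. Qed.

Lemma neg_part_ge0 x : le 0 (neg_part x).
Proof. by apply/vl_subr_ge0; apply: (pos_partP x).1; left. Qed.

Lemma pos_partBneg x : pos_part x - neg_part x = x.
Proof. by rewrite /neg_part opprB addrCA subrr addr0. Qed.

Lemma linear_eq_on_pos (T T' : A -> A) : is_linear T -> is_linear T' ->
  (forall x, le 0 x -> T x = T' x) -> T = T'.
Proof.
move=> linT linT' eqT; apply: funext => x.
rewrite -(pos_partBneg x) (linB linT) (linB linT').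
by rewrite !eqT //; [exact: neg_part_ge0 | exact: pos_part_ge0].
Qed.

Section BandProjection.
Variable P : A -> A.
Hypothesis bpP : band_projection le P.

Lemma bp_linear : is_linear P.
Proof. by case: bpP. Qed.

Lemma bp_idem x : P (P x) = P x.
Proof. by case: bpP => _ []. Qed.

Lemma bp_ge0 x : le 0 x -> le 0 (P x).
Proof. by case: bpP => _ [_ h] /h[]. Qed.

Lemma bp_le x : le 0 x -> le (P x) x.
Proof. by case: bpP => _ [_ h] /h[]. Qed.

Lemma bp_mono x y : le x y -> le (P x) (P y).
Proof.
by move/vl_subr_ge0/bp_ge0; rewrite (linB bp_linear) => /vl_subr_ge0.
Qed.

End BandProjection.

Lemma bp_orth_addr_le P P' t : band_projection le P -> band_projection le P' ->
  (forall x, P (P' x) = 0) -> le 0 t -> le (P t + P' t) t.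
Proof.
move=> bpP bpP' orthPP' t0; apply/vl_lerBrDr.
have /(bp_le bpP) : le 0 (t - P' t) by apply/vl_subr_ge0/(bp_le bpP' t0).
by rewrite (linB (bp_linear bpP)) orthPP' subr0.
Qed.

Section PositiveExtension.
Variable s : A -> A.
Hypothesis s_add : forall x y, le 0 x -> le 0 y -> s (x + y) = s x + s y.
Hypothesis s_scale : forall (c : R) x, 0 <= c -> le 0 x -> s (c *: x) = c *: s x.

Definition pos_ext x := s (pos_part x) - s (neg_part x).

Lemma pos_ext_diff a b : le 0 a -> le 0 b -> pos_ext (a - b) = s a - s b.
Proof.
move=> a0 b0; have n0 := neg_part_ge0 (a - b); have p0 := pos_part_ge0 (a - b).
have e : a + neg_part (a - b) = pos_part (a - b) + b.
  by rewrite /neg_part opprB addrCA (addrC a) subrK.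
have h : s a + s (neg_part (a - b)) = s (pos_part (a - b)) + s b.
  by rewrite -(s_add a0 n0) -(s_add p0 b0) e.
by apply/eqP; rewrite /pos_ext subr_eq addrAC h addrK.
Qed.

Lemma pos_ext_pos x : le 0 x -> pos_ext x = s x.
Proof.
move=> x0; have s0 : s 0 = 0.
  by apply: (@addrI _ (s 0)); rewrite -s_add ?addr0 //; exact: vl_refl.
by have := pos_ext_diff x0 (vl_refl HV 0); rewrite !subr0 s0 subr0.
Qed.

Lemma pos_extN x : pos_ext (- x) = - pos_ext x.
Proof.
rewrite -{1}(pos_partBneg x) opprB pos_ext_diff ?opprB //.
  exact: neg_part_ge0.
exact: pos_part_ge0.
Qed.

Lemma pos_extD x y : pos_ext (x + y) = pos_ext x + pos_ext y.
Proof.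
have [px py] := (pos_part_ge0 x, pos_part_ge0 y).
have [nx ny] := (neg_part_ge0 x, neg_part_ge0 y).
have -> : x + y = (pos_part x + pos_part y) - (neg_part x + neg_part y).
  by rewrite opprD addrACA !pos_partBneg.
have [pxy nxy] := (vl_addr_ge0 px py, vl_addr_ge0 nx ny).
by rewrite pos_ext_diff // (s_add px py) (s_add nx ny) opprD addrACA.
Qed.

Lemma pos_extZ_ge0 c x : 0 <= c -> pos_ext (c *: x) = c *: pos_ext x.
Proof.
move=> c0; have [px nx] := (pos_part_ge0 x, neg_part_ge0 x).
have [cpx cnx] := (vl_scale HV c0 px, vl_scale HV c0 nx).
rewrite -{1}(pos_partBneg x) scalerBr pos_ext_diff //.
by rewrite (s_scale c0 px) (s_scale c0 nx) scalerBr.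
Qed.

Lemma pos_ext_linear : is_linear pos_ext.
Proof.
move=> c x y; rewrite pos_extD; congr (_ + _).
have [c0 | c0] := lerP 0 c; first exact: pos_extZ_ge0.
rewrite -[c]opprK scaleNr pos_extN pos_extZ_ge0 ?scaleNr //.
by rewrite oppr_ge0 ltW.
Qed.

End PositiveExtension.

End OrderedSpace.

Arguments pos_ext {R A} le s x.

Section SupOfOrthogonalProjections.
Context {R : realType} {A : completeNormedModType R} {le : A -> A -> Prop}.
Implicit Types x y z t u : A.
Hypothesis HV : vector_lattice le.
Hypothesis Hoc : order_complete le.
Variables (I : Type) (Q : I -> A -> A) (Gamma : set I).
Hypothesis bpQ : forall i, band_projection le (Q i).
Hypothesis Q_orth : forall i j x, i <> j -> Q i (Q j x) = 0.

Let le_trans {x y z} : le x y -> le y z -> le x z := @vl_trans _ _ _ HV x y z.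
Let linQ i := bp_linear (bpQ i).

Definition proj_set x := 0 |` [set Q i x | i in Gamma].

Lemma proj_set_ub x u : le 0 u -> (forall i, Gamma i -> le (Q i x) u) ->
  forall y, proj_set x y -> le y u.
Proof. by move=> u0 Qu y [-> | [i Gi <-]] //; exact: Qu. Qed.

Lemma proj_set_sup_ex x : le 0 x -> exists s, is_sup le (proj_set x) s.
Proof.
move=> x0; apply: Hoc; first by exists 0; left.
by exists x; apply: proj_set_ub => // i _; apply: (bp_le (bpQ i)).
Qed.

Definition proj_sup x : A := xget 0 (is_sup le (proj_set x)).

Lemma proj_supP x : le 0 x -> is_sup le (proj_set x) (proj_sup x).
Proof. by move=> x0; apply: xgetPex; exact: proj_set_sup_ex. Qed.

Lemma proj_sup_ge0 x : le 0 x -> le 0 (proj_sup x).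
Proof. by move=> x0; apply: (proj_supP x0).1; left. Qed.

Lemma proj_sup_ub x i : le 0 x -> Gamma i -> le (Q i x) (proj_sup x).
Proof. by move=> x0 Gi; apply: (proj_supP x0).1; right; exists i. Qed.

Lemma proj_sup_least x u : le 0 x -> le 0 u ->
  (forall i, Gamma i -> le (Q i x) u) -> le (proj_sup x) u.
Proof. by move=> x0 u0 Qu; apply: (proj_supP x0).2; exact: proj_set_ub. Qed.

Lemma proj_sup_le x : le 0 x -> le (proj_sup x) x.
Proof. by move=> x0; apply: proj_sup_least => // i _; apply: (bp_le (bpQ i)). Qed.

Lemma proj_sup_mono x y i : le 0 x -> le x y -> Gamma i ->
  le (Q i x) (Q i (proj_sup y)).
Proof.
move=> x0 lexy Gi; rewrite -(bp_idem (bpQ i)); apply: (bp_mono HV (bpQ i)).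
exact: le_trans (bp_mono HV (bpQ i) lexy) (proj_sup_ub (vl_trans HV x0 lexy) Gi).
Qed.

Lemma proj_sup_pair_le x y i j : le 0 x -> le 0 y -> Gamma i -> Gamma j ->
  le (Q i x + Q j y) (proj_sup (x + y)).
Proof.
move=> x0 y0 Gi Gj; have xy0 := vl_addr_ge0 HV x0 y0.
have [<- | nij] := pselect (i = j).
  by rewrite -(linD (linQ i)); exact: proj_sup_ub.
apply: le_trans (bp_orth_addr_le HV (bpQ i) (bpQ j) _ (proj_sup_ge0 xy0)).
  apply: (vl_lerD HV); apply: proj_sup_mono => //.
    exact: (vl_lerDl HV).
  by rewrite addrC; exact: (vl_lerDl HV).
by move=> z; exact: Q_orth.
Qed.

Lemma proj_supD x y : le 0 x -> le 0 y ->
  proj_sup (x + y) = proj_sup x + proj_sup y.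
Proof.
move=> x0 y0; have xy0 := vl_addr_ge0 HV x0 y0; set t := proj_sup (x + y).
have t0 : le 0 t := proj_sup_ge0 xy0.
apply: (vl_antisym HV).
  apply: proj_sup_least => //.
    exact: (vl_addr_ge0 HV (proj_sup_ge0 x0) (proj_sup_ge0 y0)).
  move=> i Gi; rewrite (linD (linQ i)).
  exact: (vl_lerD HV (proj_sup_ub x0 Gi) (proj_sup_ub y0 Gi)).
have sup_y_le : le (proj_sup y) t.
  apply: proj_sup_least => // j Gj.
  apply: le_trans (proj_sup_pair_le x0 y0 Gj Gj).
  by rewrite addrC; apply: (vl_lerDl HV); apply: (bp_ge0 (bpQ j)).
apply/(vl_lerBrDr HV); apply: proj_sup_least => //; first exact/(vl_subr_ge0 HV).
move=> i Gi; apply/(vl_lerBrDr HV); rewrite addrC; apply/(vl_lerBrDr HV).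
apply: proj_sup_least => //.
  apply/(vl_subr_ge0 HV); apply: le_trans (proj_sup_pair_le x0 y0 Gi Gi).
  by apply: (vl_lerDl HV); apply: (bp_ge0 (bpQ i)).
move=> j Gj; apply/(vl_lerBrDr HV); rewrite addrC.
exact: (proj_sup_pair_le x0 y0 Gi Gj).
Qed.

Lemma proj_supZ c x : 0 <= c -> le 0 x -> proj_sup (c *: x) = c *: proj_sup x.
Proof.
move=> c0 x0; have [-> | cN0] := eqVneq c 0.
  have s00 := proj_supD (vl_refl HV 0) (vl_refl HV 0).
  by rewrite !scale0r; apply: (@addrI _ (proj_sup 0)); rewrite -s00 !addr0.
have cx0 : le 0 (c *: x) := vl_scale HV c0 x0.
apply: (vl_antisym HV).
  apply: proj_sup_least => //; first exact: (vl_scale HV c0 (proj_sup_ge0 x0)).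
  move=> i Gi; rewrite (linZ (linQ i)).
  exact: (vl_ler_wpZ2l HV c0 (proj_sup_ub x0 Gi)).
have ci0 : 0 <= c^-1 by rewrite invr_ge0.
suff h : le (proj_sup x) (c^-1 *: proj_sup (c *: x)).
  by have := vl_ler_wpZ2l HV c0 h; rewrite scalerA mulfV // scale1r.
apply: proj_sup_least => //; first exact: (vl_scale HV ci0 (proj_sup_ge0 cx0)).
move=> i Gi; have -> : Q i x = c^-1 *: Q i (c *: x).
  by rewrite (linZ (linQ i)) scalerA mulVf // scale1r.
exact: (vl_ler_wpZ2l HV ci0 (proj_sup_ub cx0 Gi)).
Qed.

Lemma proj_sup_idem x : le 0 x -> proj_sup (proj_sup x) = proj_sup x.
Proof.
move=> x0; have s0 := proj_sup_ge0 x0; apply: (vl_antisym HV).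
  exact: (proj_sup_le s0).
apply: proj_sup_least => //; first exact: (proj_sup_ge0 s0).
move=> i Gi; exact: le_trans (proj_sup_mono x0 (vl_refl HV x) Gi) (proj_sup_ub s0 Gi).
Qed.

Lemma proj_sup_band_projection :
  exists! P : A -> A, band_projection le P /\
    forall x, le 0 x -> is_sup le (proj_set x) (P x).
Proof.
have ext_pos := pos_ext_pos HV proj_supD.
have lin_ext := pos_ext_linear HV proj_supD proj_supZ.
exists (pos_ext le proj_sup); split; last first.
  move=> P [[linP _] supP]; apply: (linear_eq_on_pos HV) => // x x0.
  by rewrite ext_pos //; apply: (vl_sup_unique HV (proj_supP x0) (supP x x0)).
split; last by move=> x x0; rewrite ext_pos //; exact: (proj_supP x0).
split=> //; split.
  move=> x; have [p0 n0] := (pos_part_ge0 HV x, neg_part_ge0 HV x).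
  have e := pos_ext_diff HV proj_supD (proj_sup_ge0 p0) (proj_sup_ge0 n0).
  by rewrite !proj_sup_idem in e.
move=> x x0; rewrite ext_pos //.
by split; [exact: (proj_sup_ge0 x0) | exact: (proj_sup_le x0)].
Qed.

End SupOfOrthogonalProjections.

Section TwoSidedMultiplication.
Context {R : realType} {A : completeNormedModType R}
  {le : A -> A -> Prop} {mul : A -> A -> A}.
Hypothesis HA : banach_lattice_algebra le mul.

Lemma mul_band_projection a b : BP_l le mul a -> BP_r le mul b ->
  band_projection le (fun x => mul (mul a x) b).
Proof.
move=> [_ bpa] [_ bpb]; split.
  move=> c x y /=; rewrite (linD (bla_mul_linr HA a)) (linD (bla_mul_linl HA b)).
  by rewrite (linZ (bla_mul_linr HA a)) (linZ (bla_mul_linl HA b)).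
split=> [x | x x0] /=.
  have aaK y : mul a (mul a y) = mul a y := bp_idem bpa y.
  have bbK y : mul (mul y b) b = mul y b := bp_idem bpb y.
  by rewrite (bla_mulA HA a) aaK bbK.
have ax0 : le 0 (mul a x) := bp_ge0 bpa x0.
split; first exact: (bp_ge0 bpb ax0).
exact: (vl_trans (bla_vector_lattice HA) (bp_le bpb ax0) (bp_le bpa x0)).
Qed.

Lemma bla_mul0l z : mul 0 z = 0.
Proof. exact: (lin0 (bla_mul_linl HA z)). Qed.

Lemma bla_mulr0 z : mul z 0 = 0.
Proof. exact: (lin0 (bla_mul_linr HA z)). Qed.

Lemma mul_sandwich_eq0 a b c d x : mul a c = 0 \/ mul d b = 0 ->
  mul (mul a (mul (mul c x) d)) b = 0.
Proof.
rewrite !(bla_mulA HA) -(bla_mulA HA _ d).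
by case=> ->; rewrite ?bla_mul0l ?bla_mulr0.
Qed.

End TwoSidedMultiplication.

Theorem mainTheorem1 (R : realType) (A : completeNormedModType R)
  (le : A -> A -> Prop) (mul : A -> A -> A)
  (HA : banach_lattice_algebra le mul) (Hoc : order_complete le)
  (Lambda : Type) (p : Lambda -> A)
  (Hp : forall l, BP_l le mul (p l) /\ BP_r le mul (p l))
  (Horth : forall a b, mul (p a) (p b) = (if `[< a = b >] then p a else 0))
  (Gamma : set (Lambda * Lambda)) :
  (forall x, le 0 x -> exists s,
     is_sup le (0 |` [set mul (mul (p ab.1) x) (p ab.2) | ab in Gamma]) s) /\
  (exists! P : A -> A, band_projection le P /\
     forall x, le 0 x ->
       is_sup le (0 |` [set mul (mul (p ab.1) x) (p ab.2) | ab in Gamma]) (P x)).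
Proof.
have HV := bla_vector_lattice HA.
pose Q (ab : Lambda * Lambda) x := mul (mul (p ab.1) x) (p ab.2).
have bpQ ab : band_projection le (Q ab).
  exact: (mul_band_projection HA (Hp ab.1).1 (Hp ab.2).2).
have Q_orth i j x : i <> j -> Q i (Q j x) = 0.
  case: i j => a b [c d] /= nij; apply: (mul_sandwich_eq0 HA).
  rewrite !Horth; have [ac | nac] := pselect (a = c); last by left; rewrite asboolF.
  by right; rewrite asboolF // => /= db; apply: nij; rewrite ac db.
split; first exact: (proj_set_sup_ex Hoc Gamma bpQ).
exact: (proj_sup_band_projection HV Hoc Gamma bpQ Q_orth).
Qed.
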